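(* Let $\mathcal{C}$ be a periodic cylinder of $\Phi$ of even period $2n$, with itinerary $i_0,\dots,i_{2n-1}$ (indices taken mod $2n$, so $i_{2n}=i_0$) and angle of departure $\hat\theta_0$. If $\mathcal{C}$ is $\lambda^-$-stable or $\lambda^+$-stable, then $$\hat\theta_0=\frac{1}{2n}\sum_{k=0}^{2n-1}(-1)^{k+1}k\,\beta_{i_k,i_{k+1}}.$$
   Context: Let $P$ be a simply connected polygon in $\mathbb{R}^2$ with $d$ sides, labeled $1,\dots,d$, with $\partial P$ oriented anticlockwise. The billiard map $\Phi$ acts on unit vectors $(x,v)$ with $x\in\partial P$ and $v$ pointing into $P$: $\Phi(x,v)=(\bar x,\bar v)$, where $\bar x$ is the first point at which the ray from $x$ in direction $v$ meets $\partial P$ and $\bar v$ is the inward vector obtained by reflecting $v$ in the side containing $\bar x$. Vectors based at vertices, and vectors whose image would be based at a vertex, are excluded; the remaining domain is $M'$. Points of $M'$ have coordinates $(s,\theta)$, $s$ the arc-length parameter of $x$ on $\partial P$, $\theta\in(-\pi/2,\pi/2)$ the oriented angle between $v$ and the inward normal at $x$. $\Sigma_{i,j}$ is the set of $(s,\theta)\in M'$ with $x$ on side $i$ and $\bar x$ on side $j$. $\beta_{i,j}$ denotes $\pi$ minus the angle formed by the oriented sides $i$ and $j$; for $(s,\theta)\in\Sigma_{i,j}$ the angle coordinate of $\Phi(s,\theta)$ is $\beta_{i,j}-\theta$. For $\lambda>0$ let $R_\lambda(s,\theta)=(s,\lambda\theta)$ and $\Phi_\lambda:=R_\lambda\circ\Phi$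 (pinball billiard map for $\lambda\neq1$). The itinerary of an orbit $(s_k,\theta_k)$ is the sequence $(i_k)$ with $(s_k,\theta_k)\in\Sigma_{i_k,i_{k+1}}$. Every periodic orbit of $\Phi$ lies in a periodic cylinder: a maximal one-parameter family of parallel periodic orbits of $\Phi$ with the same itinerary. For a cylinder of period $2n$ with itinerary $i_0,\dots,i_{2n-1}$, the angles of its orbits at the successive collisions are constants $\hat\theta_0,\dots,\hat\theta_{2n-1}$; $\hat\theta_0$ (the angle at side $i_0$) is the angle of departure. A periodic orbit $q$ of $\Phi$ is $\lambda^{+}$-stable (resp. $\lambda^-$-stable) if there exist a strictly decreasing (resp. strictly increasing) sequence $\lambda_n\to1$ and, for each $n$, a periodic orbit $q_n$ of $\Phi_{\lambda_n}$ with the same itinerary as $q$ such that $q_n\to q$. A periodic cylinder is $\lambda^\pm$-stable if it contains a $\lambda^\pm$-stable periodic orbit. *)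

From Stdlib Require Import Reals Lra Lia Arith.
Open Scope R_scope.

(** Side [i] (0 <= i < d) is the oriented segment
    from [Vm i] to [Vm (i+1)].  (Sides are labelled 0..d-1 instead of 1..d.) *)

Definition pt := (R * R)%type.

Definition Vm (d : nat) (V : nat -> pt) (i : nat) : pt := V (i mod d)%nat.

Definition cross (a b : pt) : R := fst a * snd b - snd a * fst b.
Definition dot (a b : pt) : R := fst a * fst b + snd a * snd b.
Definition vsub (a b : pt) : pt := (fst a - fst b, snd a - snd b).
Definition vadd (a b : pt) : pt := (fst a + fst b, snd a + snd b).
Definition vscale (c : R) (a : pt) : pt := (c * fst a, c * snd a).

Definition edge d V i : pt := vsub (Vm d V (S i)) (Vm d V i).
Definition len d V i : R := sqrt (dot (edge d V i) (edge d V i)).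
Definition e_dir d V i : pt := vscale (/ len d V i) (edge d V i).
(* boundary oriented anticlockwise => interior on the left *)
Definition n_in d V i : pt := (- snd (e_dir d V i), fst (e_dir d V i)).

Definition on_side_closed d V (i : nat) (x : pt) : Prop :=
  exists t, 0 <= t <= 1 /\ x = vadd (Vm d V i) (vscale t (edge d V i)).
Definition on_boundary d V (x : pt) : Prop :=
  exists i, (i < d)%nat /\ on_side_closed d V i x.

Definition simple_polygon (d : nat) (V : nat -> pt) : Prop :=
  (3 <= d)%nat /\
  (forall i j, (i < d)%nat -> (j < d)%nat -> i <> j -> Vm d V i <> Vm d V j) /\
  (* consecutive sides are not collinear (genuinely d sides) *)
  (forall i, (i < d)%nat -> cross (edge d V i) (edge d V (S i)) <> 0) /\
  (forall i j x, (i < d)%nat -> (j < d)%nat -> i <> j ->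
     on_side_closed d V i x -> on_side_closed d V j x ->
     ((S i mod d)%nat = j /\ x = Vm d V j) \/ ((S j mod d)%nat = i /\ x = Vm d V i)) /\
  (* anticlockwise orientation: positive signed area *)
  0 < sum_f_R0 (fun i => cross (Vm d V i) (Vm d V (S i))) (d - 1).

Definition Scum d V (i : nat) : R := sum_f_R0 (fun k => len d V k) i - len d V i.
(* Scum i = len 0 + ... + len (i-1) *)

Definition OnSide d V (i : nat) (s : R) : Prop :=
  (i < d)%nat /\ Scum d V i < s < Scum d V (S i).

Definition pos d V (i : nat) (s : R) : pt :=
  vadd (Vm d V i) (vscale ((s - Scum d V i) / len d V i) (edge d V i)).

(** unit vector at side i making oriented angle theta with the inward normal
    (theta = oriented angle from v to the inward normal) *)
Definition dirv d V (i : nat) (theta : R) : pt :=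
  vadd (vscale (cos theta) (n_in d V i)) (vscale (sin theta) (e_dir d V i)).

Definition reflect d V (j : nat) (v : pt) : pt :=
  vsub v (vscale (2 * dot v (n_in d V j)) (n_in d V j)).

(** * The billiard map Phi, as a relation on M' (coordinates (s, theta)),
    recording the sides i, j with (s,theta) in Sigma_{i,j}. *)
Definition BStep d V (q q' : R * R) (i j : nat) : Prop :=
  let (s, th) := q in
  let (s', th') := q' in
  OnSide d V i s /\ - (PI / 2) < th < PI / 2 /\
  OnSide d V j s' /\ - (PI / 2) < th' < PI / 2 /\
  exists t, 0 < t /\
    pos d V j s' = vadd (pos d V i s) (vscale t (dirv d V i th)) /\
    (forall t', 0 < t' < t ->
       ~ on_boundary d V (vadd (pos d V i s) (vscale t' (dirv d V i th)))) /\
    reflect d V j (dirv d V i th) = dirv d V j th'.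

Definition PStep d V (lam : R) (q q' : R * R) (i j : nat) : Prop :=
  exists th'', BStep d V q (fst q', th'') i j /\ snd q' = lam * th''.

Definition Orbit d V (lam : R) (q : nat -> R * R) (it : nat -> nat) : Prop :=
  forall k, PStep d V lam (q k) (q (S k)) (it k) (it (S k)).

Definition PeriodicOrbit d V (lam : R) (q : nat -> R * R) (it : nat -> nat) : Prop :=
  Orbit d V lam q it /\ exists p, (0 < p)%nat /\ forall k, q (k + p)%nat = q k.

Definition orbit_cv (Q : nat -> nat -> R * R) (q : nat -> R * R) : Prop :=
  forall k, Un_cv (fun m => fst (Q m k)) (fst (q k)) /\
            Un_cv (fun m => snd (Q m k)) (snd (q k)).

Definition lam_plus_stable d V (q : nat -> R * R) (it : nat -> nat) : Prop :=
  exists lam : nat -> R,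
    (forall m, 0 < lam m) /\ (forall m, lam (S m) < lam m) /\ Un_cv lam 1 /\
    exists Q : nat -> nat -> R * R,
      (forall m, PeriodicOrbit d V (lam m) (Q m) it) /\ orbit_cv Q q.

Definition lam_minus_stable d V (q : nat -> R * R) (it : nat -> nat) : Prop :=
  exists lam : nat -> R,
    (forall m, 0 < lam m) /\ (forall m, lam m < lam (S m)) /\ Un_cv lam 1 /\
    exists Q : nat -> nat -> R * R,
      (forall m, PeriodicOrbit d V (lam m) (Q m) it) /\ orbit_cv Q q.

Definition side_angle d V (i j : nat) : R :=
  let c := dot (e_dir d V i) (e_dir d V j) in
  let sn := cross (e_dir d V i) (e_dir d V j) in
  if Rle_dec 0 sn then acos c else 2 * PI - acos c.

Definition beta d V (i j : nat) : R := PI - side_angle d V i j.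

(** Along a billiard orbit the reflection law reads θ_(k+1) = β_k - θ_k, so for an
    orbit of even period N = 2n, θ_0 is determined by the β_k once the alternating
    sum A = Σ (-1)^k θ_k is known, and Σ (-1)^k β_k = 0 by telescoping.  Along a
    periodic orbit of the pinball map the law becomes θ_(k+1) = λ (β_k - θ_k): the
    shift difference θ_(k+N) - θ_k is multiplied by -λ at each step, so periodicity
    forces θ_N = θ_0, and telescoping then gives (1 - λ) A = 0.  For λ ≠ 1 the
    alternating sum of the pinball orbit vanishes, hence so does that of the limit
    billiard orbit, and solving the recurrence yields the formula. *)
From Stdlib Require Import Reals Lra Lia.
Open Scope R_scope.

Fixpoint partial_sum (N : nat) (f : nat -> R) : R :=
  match N with O => 0 | S N' => partial_sum N' f + f N' end.

Definition alt_sum (N : nat) (u : nat -> R) : R :=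
  partial_sum N (fun k => (-1) ^ k * u k).

Lemma sum_f_R0_partial_sum f N : sum_f_R0 f N = partial_sum (S N) f.
Proof. induction N as [|N IH]; simpl in *; [ring | rewrite IH; ring]. Qed.

Lemma partial_sum_cv N (f : nat -> nat -> R) g :
  (forall k, Un_cv (fun m => f m k) (g k)) ->
  Un_cv (fun m => partial_sum N (f m)) (partial_sum N g).
Proof.
  intros Hfg. induction N as [|N IH]; simpl.
  - intros e He. exists O. intros. rewrite R_dist_eq. lra.
  - apply CV_plus; auto.
Qed.

Lemma alt_sum_cv N (u : nat -> nat -> R) v :
  (forall k, Un_cv (fun m => u m k) (v k)) ->
  Un_cv (fun m => alt_sum N (u m)) (alt_sum N v).
Proof.
  intros Huv. apply partial_sum_cv. intros k. apply CV_mult; auto.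
  intros e He. exists O. intros. rewrite R_dist_eq. lra.
Qed.

Lemma alt_sum_pinball_identity lam N (u b : nat -> R) :
  (forall k, u (S k) = lam * (b k - u k)) ->
  lam * alt_sum N b + (1 - lam) * alt_sum N u = u O - (-1) ^ N * u N.
Proof.
  intros Hu. unfold alt_sum. induction N as [|N IH]; simpl; [ring|].
  rewrite Hu in *. lra.
Qed.

Lemma pow_neq_1 lam p : 0 < lam -> lam <> 1 -> (0 < p)%nat -> lam ^ p <> 1.
Proof.
  intros Hpos Hneq Hp. destruct (Rlt_or_le lam 1) as [Hlt|Hge].
  - pose proof (pow_lt_1_compat lam p (conj (Rlt_le _ _ Hpos) Hlt) Hp). lra.
  - pose proof (Rlt_pow_R1 lam p ltac:(lra) Hp). lra.
Qed.

(** The difference [u (k + N) - u k] is multiplied by [-lam] at each step. *)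
Lemma pinball_periodic_shift lam p N (u b : nat -> R) :
  0 < lam -> lam <> 1 -> (0 < p)%nat ->
  (forall k, u (k + p)%nat = u k) -> (forall k, b (k + N)%nat = b k) ->
  (forall k, u (S k) = lam * (b k - u k)) ->
  u N = u O.
Proof.
  intros Hpos Hneq Hp Hu_per Hb_per Hu.
  set (w := fun k => u (k + N)%nat - u k).
  assert (Hw : forall k, w k = (- lam) ^ k * w O).
  { induction k as [|k IH]; [simpl; ring|].
    replace (w (S k)) with (- lam * w k).
    - rewrite IH. simpl. ring.
    - unfold w. replace (S k + N)%nat with (S (k + N)) by lia.
      rewrite !Hu, Hb_per. ring. }
  assert (Hwp : w p = w O).
  { unfold w. replace (p + N)%nat with (N + p)%nat by lia.
    rewrite Hu_per. rewrite <- (Nat.add_0_l p), Hu_per. reflexivity. }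
  destruct (Req_dec (w O) 0) as [Hw0|Hw0]; [unfold w in Hw0; simpl in Hw0; lra|].
  exfalso. rewrite Hw in Hwp.
  assert (Hpow : (- lam) ^ p = 1) by (apply Rmult_eq_reg_r with (w O); lra).
  apply (pow_neq_1 lam p Hpos Hneq Hp).
  rewrite <- (Rabs_right lam), <- Rabs_Ropp, RPow_abs, Hpow by lra.
  apply Rabs_R1.
Qed.

Lemma alt_sum_pinball_zero lam p N (u b : nat -> R) :
  0 < lam -> lam <> 1 -> (0 < p)%nat -> (-1) ^ N = 1 ->
  (forall k, u (k + p)%nat = u k) -> (forall k, b (k + N)%nat = b k) ->
  (forall k, u (S k) = lam * (b k - u k)) ->
  alt_sum N b = 0 -> alt_sum N u = 0.
Proof.
  intros Hpos Hneq Hp HN Hu_per Hb_per Hu Hb.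
  pose proof (alt_sum_pinball_identity lam N u b Hu) as Hid.
  rewrite Hb, HN, (pinball_periodic_shift lam p N u b) in Hid; auto.
  assert (Hprod : (1 - lam) * alt_sum N u = 0) by lra.
  destruct (Rmult_integral _ _ Hprod); lra.
Qed.

Lemma weighted_alt_sum_billiard N (u b : nat -> R) :
  (forall k, u (S k) = b k - u k) ->
  partial_sum N (fun k => (-1) ^ S k * INR k * b k) =
    u O - alt_sum N u + (-1) ^ N * (INR N - 1) * u N.
Proof.
  intros Hu. unfold alt_sum. induction N as [|N IH]; cbn [partial_sum]; [simpl; ring|].
  rewrite IH, S_INR, Hu. simpl. ring.
Qed.

Lemma strictly_increasing_cv_neq (lam : nat -> R) l :
  (forall m, lam m < lam (S m)) -> Un_cv lam l -> forall m, lam m <> l.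
Proof.
  intros Hinc Hcv m.
  assert (lam (S m) <= l) by (apply growing_ineq; auto; intros k; apply Rlt_le; auto).
  specialize (Hinc m). lra.
Qed.

Lemma strictly_decreasing_cv_neq (lam : nat -> R) l :
  (forall m, lam (S m) < lam m) -> Un_cv lam l -> forall m, lam m <> l.
Proof.
  intros Hdec Hcv m.
  assert (l <= lam (S m)) by (apply decreasing_ineq; auto; intros k; apply Rlt_le; auto).
  specialize (Hdec m). lra.
Qed.

Lemma angle_eq_of_cos_sin x y :
  - (PI / 2) < x < PI / 2 -> - (3 * (PI / 2)) < y < 3 * (PI / 2) ->
  cos x = cos y -> sin x = sin y -> x = y.
Proof.
  intros Hx Hy Hc Hs.
  set (z := (y - x) / 2).
  assert (Hcz : cos (2 * z) = 1).
  { replace (2 * z) with (y - x) by (unfold z; field).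
    rewrite cos_minus, <- Hc, <- Hs.
    pose proof (sin2_cos2 x). unfold Rsqr in *. lra. }
  rewrite cos_2a_sin in Hcz.
  assert (Hsz : sin z = 0) by nra.
  destruct (sin_eq_0_0 _ Hsz) as [k Hk].
  pose proof PI_RGT_0.
  assert (Hz : - PI < z < PI) by (unfold z; lra).
  rewrite Hk in Hz.
  assert (Hk1 : (-1 < k)%Z) by (apply lt_IZR; apply Rmult_lt_reg_r with PI; lra).
  assert (Hk2 : (k < 1)%Z) by (apply lt_IZR; apply Rmult_lt_reg_r with PI; lra).
  assert (k = 0%Z) by lia. subst k.
  unfold z in Hk. simpl in Hk. lra.
Qed.

Section Polygon.

Variables (d : nat) (V : nat -> pt).
Hypothesis HP : simple_polygon d V.

Lemma edge_norm2_pos i : (i < d)%nat -> 0 < dot (edge d V i) (edge d V i).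
Proof.
  intros Hi. destruct HP as [_ [_ [Hcross _]]]. specialize (Hcross i Hi).
  unfold cross, dot in *.
  destruct (edge d V i) as [a b], (edge d V (S i)) as [c e]; simpl in *.
  destruct (Req_dec a 0) as [->|Ha].
  - destruct (Req_dec b 0) as [->|Hb]; [exfalso; apply Hcross; ring|].
    assert (0 < b * b) by (apply Rsqr_pos_lt; auto). nra.
  - assert (0 < a * a) by (apply Rsqr_pos_lt; auto). nra.
Qed.

Lemma e_dir_unit i : (i < d)%nat -> dot (e_dir d V i) (e_dir d V i) = 1.
Proof.
  intros Hi. pose proof (edge_norm2_pos i Hi) as Hpos.
  assert (Hlen : 0 < len d V i) by (apply sqrt_lt_R0; auto).
  assert (Hsq : len d V i * len d V i = dot (edge d V i) (edge d V i))
    by (apply sqrt_sqrt; lra).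
  unfold e_dir. set (L := len d V i) in *. clearbody L.
  unfold dot, vscale in *. destruct (edge d V i) as [a b]. cbn [fst snd] in *.
  replace (/ L * a * (/ L * a) + / L * b * (/ L * b)) with ((a * a + b * b) / (L * L))
    by (field; lra).
  rewrite <- Hsq. field. lra.
Qed.

Lemma dot_dirv_n_in i th : (i < d)%nat -> dot (dirv d V i th) (n_in d V i) = cos th.
Proof.
  intros Hi. pose proof (e_dir_unit i Hi) as U.
  unfold dirv, n_in, dot, vadd, vscale in *.
  destruct (e_dir d V i) as [a b]. cbn [fst snd] in *.
  transitivity (cos th * (a * a + b * b)); [ring | rewrite U; ring].
Qed.

Lemma dot_dirv_e_dir i th : (i < d)%nat -> dot (dirv d V i th) (e_dir d V i) = sin th.
Proof.
  intros Hi. pose proof (e_dir_unit i Hi) as U.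
  unfold dirv, n_in, dot, vadd, vscale in *.
  destruct (e_dir d V i) as [a b]. cbn [fst snd] in *.
  transitivity (sin th * (a * a + b * b)); [ring | rewrite U; ring].
Qed.

Lemma dot_reflect_n_in j v : (j < d)%nat ->
  dot (reflect d V j v) (n_in d V j) = - dot v (n_in d V j).
Proof.
  intros Hj. pose proof (e_dir_unit j Hj) as U.
  unfold reflect, n_in, dot, vsub, vscale in *.
  destruct (e_dir d V j) as [a b], v as [x y]. cbn [fst snd] in *.
  transitivity ((- b * x + a * y) * (3 - 2 * (a * a + b * b)) - 2 * (- b * x + a * y));
    [ring | rewrite U; ring].
Qed.

Lemma dot_reflect_e_dir j v : dot (reflect d V j v) (e_dir d V j) = dot v (e_dir d V j).
Proof.
  unfold reflect, n_in, dot, vsub, vscale.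
  destruct (e_dir d V j) as [a b], v as [x y]. cbn [fst snd]. ring.
Qed.

(** The reflected direction, measured at side [j], is the incoming direction rotated
    by the oriented angle between the sides. *)
Lemma reflect_dirv_cos_sin i j th th' : (i < d)%nat -> (j < d)%nat ->
  reflect d V j (dirv d V i th) = dirv d V j th' ->
  cos th' = - dot (e_dir d V i) (e_dir d V j) * cos th
            + cross (e_dir d V i) (e_dir d V j) * sin th /\
  sin th' = cross (e_dir d V i) (e_dir d V j) * cos th
            + dot (e_dir d V i) (e_dir d V j) * sin th.
Proof.
  intros Hi Hj Href. split.
  - rewrite <- (dot_dirv_n_in j th' Hj), <- Href, (dot_reflect_n_in j _ Hj).
    unfold dirv, n_in, dot, cross, vadd, vscale. cbn [fst snd]. ring.
  - rewrite <- (dot_dirv_e_dir j th' Hj), <- Href, dot_reflect_e_dir.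
    unfold dirv, n_in, dot, cross, vadd, vscale. cbn [fst snd]. ring.
Qed.

Lemma side_angle_bound i j : 0 <= side_angle d V i j <= 2 * PI.
Proof.
  unfold side_angle. pose proof PI_RGT_0.
  destruct (Rle_dec _ _); pose proof (acos_bound (dot (e_dir d V i) (e_dir d V j))); lra.
Qed.

Lemma cos_sin_side_angle i j : (i < d)%nat -> (j < d)%nat ->
  cos (side_angle d V i j) = dot (e_dir d V i) (e_dir d V j) /\
  sin (side_angle d V i j) = cross (e_dir d V i) (e_dir d V j).
Proof.
  intros Hi Hj. pose proof (e_dir_unit i Hi) as Ui. pose proof (e_dir_unit j Hj) as Uj.
  unfold side_angle. unfold dot, cross in *.
  destruct (e_dir d V i) as [a b], (e_dir d V j) as [p r]. cbn [fst snd] in *.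
  set (c := a * p + b * r). set (sn := a * r - b * p).
  assert (Hlagrange : c * c + sn * sn = 1).
  { transitivity ((a * a + b * b) * (p * p + r * r)); [unfold c, sn; ring|].
    rewrite Ui, Uj. ring. }
  assert (Hc : -1 <= c <= 1) by nra.
  assert (Hsqrt : sqrt (1 - c²) = Rabs sn).
  { replace (1 - c²) with (sn * sn) by (unfold Rsqr; lra). apply sqrt_Rsqr_abs. }
  destruct (Rle_dec 0 sn) as [Hs|Hs].
  - rewrite cos_acos, sin_acos, Hsqrt, Rabs_right by lra. auto.
  - rewrite cos_minus, sin_minus, cos_2PI, sin_2PI, cos_acos, sin_acos, Hsqrt,
      Rabs_left by lra.
    split; ring.
Qed.

Lemma billiard_angle q q' i j : BStep d V q q' i j -> snd q' = beta d V i j - snd q.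
Proof.
  destruct q as [s th], q' as [s' th']. simpl.
  intros [[Hi _] [Hth [[Hj _] [Hth' [t [_ [_ [_ Href]]]]]]]].
  destruct (reflect_dirv_cos_sin i j th th' Hi Hj Href) as [Hc Hs].
  destruct (cos_sin_side_angle i j Hi Hj) as [Ca Sa].
  pose proof (side_angle_bound i j). pose proof PI_RGT_0.
  unfold beta. replace (PI - side_angle d V i j - th)
    with (PI - (side_angle d V i j + th)) by ring.
  apply angle_eq_of_cos_sin; [lra | lra | |].
  - rewrite Rtrigo_facts.cos_pi_minus, cos_plus, Ca, Sa, Hc. ring.
  - rewrite sin_PI_x, sin_plus, Ca, Sa, Hs. ring.
Qed.

Lemma pinball_angle lam q q' i j :
  PStep d V lam q q' i j -> snd q' = lam * (beta d V i j - snd q).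
Proof.
  intros [th [Hstep ->]]. apply billiard_angle in Hstep. simpl in Hstep.
  rewrite Hstep. reflexivity.
Qed.

Lemma Scum_le i k : Scum d V i <= Scum d V (i + k).
Proof.
  induction k as [|k IH]; [rewrite Nat.add_0_r; lra|].
  rewrite Nat.add_succ_r. unfold Scum in *. simpl.
  pose proof (sqrt_pos (dot (edge d V (i + k)) (edge d V (i + k)))). unfold len in *. lra.
Qed.

Lemma OnSide_unique i j s : OnSide d V i s -> OnSide d V j s -> i = j.
Proof.
  intros [_ [Hi1 Hi2]] [_ [Hj1 Hj2]].
  destruct (Nat.lt_trichotomy i j) as [Hij|[Hij|Hij]]; auto; exfalso.
  - pose proof (Scum_le (S i) (j - S i)) as Hle.
    replace (S i + (j - S i))%nat with j in Hle by lia. lra.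
  - pose proof (Scum_le (S j) (i - S j)) as Hle.
    replace (S j + (i - S j))%nat with i in Hle by lia. lra.
Qed.

Lemma orbit_itinerary_periodic lam q it N :
  Orbit d V lam q it -> (forall k, q (k + N)%nat = q k) ->
  forall k, it (k + N)%nat = it k.
Proof.
  intros Horb Hper k.
  assert (Hon : forall m, OnSide d V (it m) (fst (q m))).
  { intros m. destruct (Horb m) as [th [Hstep _]].
    destruct (q m), (q (S m)). exact (proj1 Hstep). }
  apply (OnSide_unique _ _ (fst (q k))); [rewrite <- Hper|]; apply Hon.
Qed.

(** Stability only matters through approximating orbits with [lam m <> 1]. *)
Lemma lam_stable_approximation q it :
  lam_minus_stable d V q it \/ lam_plus_stable d V q it ->
  exists (lam : nat -> R) (Q : nat -> nat -> R * R),
    (forall m, 0 < lam m) /\ (forall m, lam m <> 1) /\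
    (forall m, PeriodicOrbit d V (lam m) (Q m) it) /\ orbit_cv Q q.
Proof.
  intros [[lam [Hpos [Hmono [Hcv [Q [HQ HQcv]]]]]] | [lam [Hpos [Hmono [Hcv [Q [HQ HQcv]]]]]]];
    exists lam, Q; (split; [exact Hpos | split; [| split; assumption]]).
  - exact (strictly_increasing_cv_neq lam 1 Hmono Hcv).
  - exact (strictly_decreasing_cv_neq lam 1 Hmono Hcv).
Qed.

Lemma lam_stable_alt_sum_zero q it N :
  lam_minus_stable d V q it \/ lam_plus_stable d V q it ->
  (forall k, it (k + N)%nat = it k) -> (-1) ^ N = 1 ->
  alt_sum N (fun k => beta d V (it k) (it (S k))) = 0 ->
  alt_sum N (fun k => snd (q k)) = 0.
Proof.
  intros Hst Hit HN Hb.
  destruct (lam_stable_approximation q it Hst) as [lam [Q [Hpos [Hneq [HQ HQcv]]]]].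
  assert (HQ0 : forall m, alt_sum N (fun k => snd (Q m k)) = 0).
  { intros m. destruct (HQ m) as [Horb [p [Hp Hper]]].
    apply (alt_sum_pinball_zero (lam m) p N _ (fun k => beta d V (it k) (it (S k))));
      auto.
    - intros k. rewrite Hper. reflexivity.
    - intros k. simpl. replace (S (k + N)) with (S k + N)%nat by lia. rewrite !Hit. auto.
    - intros k. exact (pinball_angle _ _ _ _ _ (Horb k)). }
  apply (UL_sequence (fun m => alt_sum N (fun k => snd (Q m k)))).
  - apply alt_sum_cv. intros k. exact (proj2 (HQcv k)).
  - intros e He. exists O. intros m _. rewrite HQ0, R_dist_eq. lra.
Qed.

End Polygon.

Theorem proposition3p2 :
  forall (d : nat) (V : nat -> pt), simple_polygon d V ->
  forall (n : nat) (q : nat -> R * R) (it : nat -> nat),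
    (0 < n)%nat ->
    Orbit d V 1 q it ->
    (forall k, q (k + 2 * n)%nat = q k) ->
    (lam_minus_stable d V q it \/ lam_plus_stable d V q it) ->
    snd (q 0%nat) =
      / INR (2 * n) *
      sum_f_R0 (fun k => (-1) ^ (S k) * INR k * beta d V (it k) (it (S k)))
               (2 * n - 1).
Proof.
  intros d V HP n q it Hn Horb Hper Hst.
  set (N := (2 * n)%nat). fold N in Hper.
  set (th := fun k => snd (q k)).
  set (b := fun k => beta d V (it k) (it (S k))).
  assert (HN : (-1) ^ N = 1) by apply pow_1_even.
  assert (Hth : forall k, th (S k) = b k - th k).
  { intros k. unfold th, b. rewrite (pinball_angle d V HP _ _ _ _ _ (Horb k)). ring. }
  assert (HthN : th N = th O).
  { unfold th. rewrite <- (Nat.add_0_l N), Hper. reflexivity. }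
  assert (Hb : alt_sum N b = 0).
  { assert (Hth1 : forall k, th (S k) = 1 * (b k - th k)) by (intros k; rewrite Hth; ring).
    pose proof (alt_sum_pinball_identity 1 N th b Hth1) as Hid.
    rewrite HthN, HN in Hid. lra. }
  assert (Hth0 : alt_sum N th = 0).
  { exact (lam_stable_alt_sum_zero d V HP q it N Hst
             (orbit_itinerary_periodic d V 1 q it N Horb Hper) HN Hb). }
  rewrite sum_f_R0_partial_sum. replace (S (N - 1)) with N by (unfold N; lia).
  change (fun k => (-1) ^ S k * INR k * beta d V (it k) (it (S k)))
    with (fun k => (-1) ^ S k * INR k * b k).
  rewrite (weighted_alt_sum_billiard N th b Hth), Hth0, HN, HthN.
  assert (HN0 : INR N <> 0) by (apply not_0_INR; unfold N; lia).
  change (snd (q 0%nat)) with (th 0%nat). field. exact HN0.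
Qed.
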